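(* Let $q,q',n$ be integers with $q'\ge 2q+2$, $q>1$ and $n>1$. Let $S$ be an $\mathcal{OS}_q(n)$ of period $m$ with ring sequence $[s_0,\ldots,s_{m-1}]$ where $s_0=0$; for $x\in\mathbb{Z}_q$ let $x'$ denote the class in $\mathbb{Z}_{q'}$ of the integer in $\{0,\ldots,q-1\}$ representing $x$; define $t_i=(-1)^{i+m-1}s_i'$ if $s_i'\neq0$ and $t_i=(-1)^{i+m-1}q$ if $s_i'=0$; and let $U$ be the sequence over $\mathbb{Z}_{q'}$ of period $4m$ with ring sequence $[s_0',\ldots,s_{m-1}',-s_0',\ldots,-s_{m-1}',t_0,\ldots,t_{m-1},-t_0,\ldots,-t_{m-1}]$ (an $\mathcal{SOS}_{q'}(n)$ containing an even number of zeros in its ring sequence). Let $U'$ be obtained from $U$ by replacing half of the zeros in its ring sequence by $q+1$ and the other half by $q'-q-1$. Then $U'$ is a good $\mathcal{SOS}_{q'}(n)$ of the same period as $U$, and $w_{q'}(U')=0$.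
   Context: For a periodic sequence $S=(s_i)$ write $\mathbf{s}_n(i)=(s_i,\ldots,s_{i+n-1})$; $\mathbf{u}^R$ is the reverse of a tuple and $-\mathbf{u}$ its termwise negative. An $n$-window sequence of period $m$ satisfies $\mathbf{s}_n(i)=\mathbf{s}_n(j)\Rightarrow i\equiv j\pmod m$. An $\mathcal{OS}_q(n)$ is a $q$-ary $n$-window sequence with $\mathbf{s}_n(i)\neq\mathbf{s}_n(j)^R$ for all $i,j$; an $\mathcal{SOS}_q(n)$ is an $\mathcal{OS}_q(n)$ with also $\mathbf{s}_n(i)\neq-\mathbf{s}_n(j)^R$ for all $i,j$. Such a sequence is good if every run of consecutive $0$s has length at most $n-2$. The ring sequence of a sequence of period $m$ is one period. The weight $w(U)$ is the integer sum of one period with terms in $\{0,\ldots,q'-1\}$; $w_{q'}(U)=w(U)\bmod q'$. *)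

(* Periodic sequences are represented by their ring sequence
   (one period) [r : seq nat]; the i-th term of the periodic sequence is
   [nth 0 r (i %% size r)]. Elements of Z_q are represented by their
   representative in {0,...,q-1}. *)
From mathcomp Require Import all_boot.
Set Implicit Arguments. Unset Strict Implicit. Unset Printing Implicit Defensive.

Definition term (r : seq nat) (i : nat) : nat := nth 0 r (i %% size r).

Definition window (r : seq nat) (n i : nat) : seq nat :=
  mkseq (fun k => term r (i + k)) n.

Definition negq (q x : nat) : nat := (q - x) %% q.

Definition qary (q : nat) (r : seq nat) : Prop := all (fun x => x < q) r.

Definition window_seq (n : nat) (r : seq nat) : Prop :=
  0 < size r /\
  forall i j, window r n i = window r n j -> i = j %[mod size r].

Definition OS (q n : nat) (r : seq nat) : Prop :=
  [/\ qary q r, window_seq n r &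
      forall i j, window r n i <> rev (window r n j)].

Definition SOS (q n : nat) (r : seq nat) : Prop :=
  OS q n r /\ forall i j, window r n i <> map (negq q) (rev (window r n j)).

(* good: every run of consecutive 0s has length at most n-2,
   i.e. no n-1 consecutive terms are all 0 *)
Definition good (n : nat) (r : seq nat) : Prop :=
  forall i, ~~ all (fun x => x == 0) (window r n.-1 i).

Definition weight (r : seq nat) : nat := sumn r.
Definition weight_mod (q' : nat) (r : seq nat) : nat := weight r %% q'.

Definition sgn_mul (q' e x : nat) : nat := if odd e then negq q' x else x %% q'.

Definition t_term (q q' : nat) (s : seq nat) (i : nat) : nat :=
  let m := size s in
  let si := nth 0 s i in
  if si != 0 then sgn_mul q' (i + m - 1) si else sgn_mul q' (i + m - 1) q.

Definition U_ring (q q' : nat) (s : seq nat) : seq nat :=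
  let t := [seq t_term q q' s i | i <- iota 0 (size s)] in
  s ++ map (negq q') s ++ t ++ map (negq q') t.

Definition half_replacement (q q' : nat) (U U' : seq nat) : Prop :=
  size U' = size U /\
  exists A : seq nat,
    [/\ uniq A,
        {in A, forall i, i < size U /\ nth 0 U i = 0},
        (size A).*2 = count (fun x => x == 0) U &
        forall i, i < size U ->
          nth 0 U' i = if nth 0 U i != 0 then nth 0 U i
                       else if i \in A then q.+1 else q' - q.+1].

From mathcomp Require Import all_boot zify.
Set Implicit Arguments. Unset Strict Implicit. Unset Printing Implicit Defensive.

(* Read as integers in (-q', q'), the terms of U have absolute value at most q
   while the fillers q+1 and q'-q-1 do not, so U' has no zeros and determines U.
   Taking absolute values modulo q maps both U and -U termwise onto S; hence a
   window of U' equal to a reversed (or negated reversed) window would give a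
   reversed repetition in S, and two equal windows of U' start at positions
   congruent modulo m.  These positions are even congruent modulo 4m: the signs
   of two consecutive terms tell the blocks s, -s, t, -t apart, as signs
   alternate inside t and -t and are constant or zero inside s and -s; only s
   and -s need more, and there equal windows would either be an all-zero window
   of S, which is its own reverse, or run into the nonzero block t.  Finally
   w(U') = w(U) + |A| ((q+1) + (q'-q-1)), and w(U) = 0 mod q' since
   U = [s, -s, t, -t]. *)

Lemma negqE q' x : x < q' -> negq q' x = if x == 0 then 0 else q' - x.
Proof.
rewrite /negq; case: eqP => [->|x_neq0] ltxq; first by rewrite subn0 modnn.
by rewrite modn_small //; lia.
Qed.

Lemma dvdn_sumn_negq q' l :
  all (fun x => x < q') l -> q' %| sumn (l ++ map (negq q') l).
Proof.
elim: l => [|x l IHl] //= /andP[ltxq /IHl dv].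
rewrite !sumn_cat /= in dv *.
have -> : x + (sumn l + (negq q' x + sumn (map (negq q') l))) =
          (x + negq q' x) + (sumn l + sumn (map (negq q') l)) by lia.
apply: dvdn_add dv; rewrite negqE //; case: eqP => [-> //|_].
by rewrite subnKC // ltnW.
Qed.

Lemma modn_mul_split p m k : p %% (k * m) = (p %/ m %% k) * m + p %% m.
Proof.
by rewrite modn_divl {1}(divn_eq (p %% (k * m)) m) modn_dvdm // dvdn_mull.
Qed.

Lemma window_mod r n i : window r n (i %% size r) = window r n i.
Proof. by apply: eq_mkseq => k; rewrite /term modnDml. Qed.

Lemma window_map (g : nat -> nat) r r' n i :
  (forall p, g (term r p) = term r' p) -> map g (window r n i) = window r' n i.
Proof. by move=> grr'; rewrite /window /mkseq -map_comp; apply: eq_map => k /=. Qed.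

Lemma window_rev_map (g f : nat -> nat) r r' n i j :
  (forall p, g (term r p) = term r' p) -> (forall p, g (f (term r p)) = term r' p) ->
  window r n i = map f (rev (window r n j)) -> window r' n i = rev (window r' n j).
Proof.
move=> gr gfr eq_ij.
by rewrite -(window_map _ _ gr) eq_ij -map_comp map_rev (window_map _ _ gfr).
Qed.

Lemma good_of_neq0 n r : 1 < n -> (forall p, term r p != 0) -> good n r.
Proof.
by case: n => [|[|n]] // _ r_neq0 i; rewrite /window /= addn0 (negbTE (r_neq0 i)).
Qed.

Lemma sumn_replace_zeros (U U' A : seq nat) a b :
  size U' = size U -> uniq A -> {in A, forall i, i < size U /\ nth 0 U i = 0} ->
  (size A).*2 = count (fun x => x == 0) U ->
  (forall i, i < size U -> nth 0 U' i =
     if nth 0 U i != 0 then nth 0 U i else if i \in A then a else b) ->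
  sumn U' = sumn U + size A * (a + b).
Proof.
move=> eq_size uniqA A_zero cntZ U'E.
pose I := index_iota 0 (size U); pose Z i := nth 0 U i == 0.
have sumn_nth V : size V = size U -> sumn V = \sum_(i <- I) nth 0 V i.
  by move=> eq_sizeV; rewrite sumnE (big_nth 0) eq_sizeV.
have cntZ_I : count Z I = (size A).*2.
  have nthU : map (nth 0 U) I = U by rewrite /I /index_iota subn0; exact: mkseq_nth.
  by rewrite cntZ -[X in _ = count _ X]nthU count_map.
have cntZA : count (fun i => Z i && (i \in A)) I = size A.
  rewrite -size_filter; apply/perm_size/uniq_perm => //.
    by rewrite filter_uniq // iota_uniq.
  move=> i; rewrite mem_filter mem_iota /=.
  apply/idP/idP => [/andP[/andP[] //]|iA]; have [ltiU Ui0] := A_zero i iA.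
  by rewrite /Z Ui0 iA /= add0n subn0.
have cntZnA : count (fun i => Z i && (i \notin A)) I = size A.
  have := count_predC (mem A) (filter Z I).
  rewrite size_filter !count_filter cntZ_I.
  have -> : count (predI (mem A) Z) I = size A.
    by rewrite -cntZA; apply: eq_count => i; rewrite /= andbC.
  have -> : count (predI (predC (mem A)) Z) I = count (fun i => Z i && (i \notin A)) I.
    by apply: eq_count => i; rewrite /= andbC.
  lia.
rewrite (sumn_nth U') // (sumn_nth U) //.
pose F i := nth 0 U i + if Z i then if i \in A then a else b else 0.
rewrite (eq_big_seq F) /F; last first.
  move=> i; rewrite mem_iota subn0 => /andP[_ ltiU]; rewrite U'E // /F /Z.
  by case: eqP => [->|_] /=; rewrite ?addn0.
rewrite big_split /= -big_mkcond [X in _ + X](bigID (mem A)) /=.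
rewrite [X in _ + (X + _)](eq_bigr (fun=> a)); last by move=> i /andP[_ ->].
rewrite [X in _ + (_ + X)](eq_bigr (fun=> b)); last by move=> i /andP[_ /negbTE ->].
by rewrite !big_const_seq !iter_addn_0 cntZA cntZnA; lia.
Qed.

Section ZqValues.

Variables q q' : nat.

(* A term u of U stands for the integer u if u <= q and u - q' if u >= q' - q;
   [sign] is [None] at 0 and [Some true] on negative integers. *)
Definition sign u : option bool := if u == 0 then None else Some (q < u).

Definition absle u := (u < q') && ((u <= q) || (q' - q <= u)).

Definition abs_mod u := if u <= q then u %% q else (q' - u) %% q.

Definition unfill v := if (v == q.+1) || (v == q' - q.+1) then 0 else v.

Definition fills u v := if u == 0 then (v == q.+1) || (v == q' - q.+1) else v == u.

Definition decode v := abs_mod (unfill v).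

Lemma sign_pos x : 0 < x <= q -> sign x = Some false.
Proof. by case/andP=> x_gt0 lexq; rewrite /sign gtn_eqF // ltnNge lexq. Qed.

Lemma sign_neg x : q < x -> sign x = Some true.
Proof. by move=> ltqx; rewrite /sign ltqx ifN //; lia. Qed.

Lemma abs_mod_small x : x <= q -> abs_mod x = x %% q.
Proof. by rewrite /abs_mod => ->. Qed.

Lemma term_fills V V' p : half_replacement q q' V V' -> 0 < size V ->
  fills (term V p) (term V' p).
Proof.
case=> eq_size [A [_ _ _ V'E]] V_gt0; rewrite /term eq_size V'E ?ltn_mod // /fills.
by case: (nth 0 V _ =P 0) => [->|_] /=; first case: (_ \in A); rewrite eqxx ?orbT.
Qed.

Hypothesis q'_ge : 2 * q + 2 <= q'.

Lemma abs_mod_opp x : x <= q -> abs_mod (q' - x) = x %% q.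
Proof. by move=> lexq; rewrite /abs_mod ifN ?subKn //; lia. Qed.

Lemma abs_mod_negq u : absle u -> abs_mod (negq q' u) = abs_mod u.
Proof.
case/andP=> ltuq' range_u; rewrite negqE //.
have [leuq|ltqu] := leqP u q.
  by case: (u =P 0) => [->//|_]; rewrite abs_mod_opp // abs_mod_small.
have -> : abs_mod u = (q' - u) %% q by rewrite /abs_mod leqNgt ltqu.
by rewrite ifN ?abs_mod_small //; lia.
Qed.

Lemma absle_negq u : absle u -> absle (negq q' u).
Proof.
by case/andP=> ltuq' range_u; rewrite negqE //; case: (u =P 0) => u0; rewrite /absle; lia.
Qed.

Lemma unfill_absle u : absle u -> unfill u = u.
Proof. by rewrite /absle /unfill => absle_u; rewrite ifN //; lia. Qed.

Lemma fill_neq0 u v : fills u v -> v != 0.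
Proof. by rewrite /fills; case: (u =P 0) => [_|/eqP u_neq0 /eqP ->] //; lia. Qed.

Lemma fill_lt u v : absle u -> fills u v -> v < q'.
Proof.
by rewrite /absle /fills; case: (u =P 0) => _ /andP[ltuq' _]; [lia | move/eqP ->].
Qed.

Lemma unfill_fill u v : absle u -> fills u v -> unfill v = u.
Proof.
rewrite /fills; case: (u =P 0) => [->|_] absle_u; last by move/eqP ->; exact: unfill_absle.
by rewrite /unfill => ->.
Qed.

Lemma unfill_negq_fill u v : absle u -> fills u v -> unfill (negq q' v) = negq q' u.
Proof.
rewrite /fills; case: (u =P 0) => [->|_] absle_u.
  rewrite [negq q' 0]negqE /unfill; last lia.
  case/orP=> /eqP ->; rewrite negqE /=; try lia; first by rewrite eqxx orbT.
  have -> : (q' - q.+1 == 0) = false by apply/eqP; lia.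
  by rewrite subKn ?eqxx //; lia.
by move/eqP ->; rewrite unfill_absle // absle_negq.
Qed.

End ZqValues.

Section URing.

Variables (q q' : nat) (s : seq nat).

Local Notation m := (size s).
Local Notation U := (U_ring q q' s).
Local Notation absle := (absle q q').
Local Notation abs_mod := (abs_mod q q').
Local Notation sign := (sign q).
Local Notation unfill := (unfill q q').
Local Notation fills := (fills q q').
Local Notation decode := (decode q q').

(* t_j = (-1)^(j+m-1) t_abs j, which is negative iff t_neg j. *)
Definition t_abs j := if nth 0 s j == 0 then q else nth 0 s j.

Definition t_neg j := odd (j + m - 1).

Definition U_block b j :=
  match b with
  | 0 => nth 0 s j
  | 1 => negq q' (nth 0 s j)
  | 2 => t_term q q' s j
  | _ => negq q' (t_term q q' s j)
  end.

Definition sign_block b j : option bool :=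
  match b with
  | 0 => if nth 0 s j == 0 then None else Some false
  | 1 => if nth 0 s j == 0 then None else Some true
  | 2 => Some (t_neg j)
  | _ => Some (~~ t_neg j)
  end.

Lemma t_negS j : 0 < m -> t_neg j.+1 = ~~ t_neg j.
Proof. by move=> m_gt0; rewrite /t_neg (_ : j.+1 + m - 1 = (j + m - 1).+1) //; lia. Qed.

Lemma t_neg_last : t_neg m.-1 = false.
Proof. by rewrite /t_neg (_ : m.-1 + m - 1 = (m.-1).*2) ?odd_double //; lia. Qed.

Lemma size_U_ring : size U = 4 * m.
Proof. by rewrite /U_ring !size_cat !size_map size_iota; lia. Qed.

Lemma nth_U_ring b j : b < 4 -> j < m -> nth 0 U (b * m + j) = U_block b j.
Proof.
move=> ltb4 ltjm; rewrite /U_ring.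
have nth_t : nth 0 [seq t_term q q' s i | i <- iota 0 m] j = t_term q q' s j.
  by rewrite (nth_map 0) ?size_iota // nth_iota.
case: b ltb4 => [|[|[|[|b]]]] // _; rewrite !nth_cat !size_map ?size_iota.
- by rewrite ltjm.
- rewrite ifN; last lia.
  have -> : 1 * m + j - m = j by lia.
  by rewrite ltjm (nth_map 0).
- do 2 (rewrite ifN; last lia).
  have -> : 2 * m + j - m - m = j by lia.
  by rewrite ltjm nth_t.
- do 3 (rewrite ifN; last lia).
  have -> : 3 * m + j - m - m - m = j by lia.
  by rewrite (nth_map 0) ?size_map ?size_iota ?nth_t.
Qed.

Lemma term_U_ring p : 0 < m -> term U p = U_block (p %/ m %% 4) (p %% m).
Proof.
by move=> m_gt0; rewrite /term size_U_ring modn_mul_split nth_U_ring ?ltn_mod.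
Qed.

Lemma term_U_ring_block b j : j < m -> term U (b * m + j) = U_block (b %% 4) j.
Proof.
move=> ltjm; have m_gt0 : 0 < m by lia.
by rewrite term_U_ring // divnMDl // divn_small // addn0 modnMDl (modn_small ltjm).
Qed.

Hypotheses (q_gt0 : 0 < q) (q'_ge : 2 * q + 2 <= q') (s_qary : qary q s).

Lemma nth_s_lt j : nth 0 s j < q.
Proof.
have [ltjm|lemj] := ltnP j m; last by rewrite nth_default // ltnW.
exact: (allP s_qary) (mem_nth 0 ltjm).
Qed.

Lemma t_abs_bounds j : 0 < t_abs j <= q.
Proof. by have := nth_s_lt j; rewrite /t_abs; case: eqP => ? ?; lia. Qed.

Lemma t_termE j : t_term q q' s j = if t_neg j then q' - t_abs j else t_abs j.
Proof.
have := nth_s_lt j; rewrite /t_term /t_neg /sgn_mul /t_abs.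
case: eqP => [->|sj_neq0] /= ltsq; case: odd;
  rewrite ?negqE ?modn_small //; try lia; case: eqP => //; lia.
Qed.

Lemma U_blockE b j : U_block b j =
  match b with
  | 0 => nth 0 s j
  | 1 => if nth 0 s j == 0 then 0 else q' - nth 0 s j
  | 2 => if t_neg j then q' - t_abs j else t_abs j
  | _ => if t_neg j then t_abs j else q' - t_abs j
  end.
Proof.
have := nth_s_lt j; have := t_abs_bounds j.
case: b => [|[|[|b]]] //= abs_t lt_sq; rewrite ?t_termE ?negqE //; try lia.
  by case: (t_neg j); case: eqP; lia.
by case: (t_neg j); lia.
Qed.

Lemma absle_U_block b j : absle (U_block b j).
Proof.
have := nth_s_lt j; have := t_abs_bounds j; rewrite /absle U_blockE.
by case: b => [|[|[|b]]] /=; try case: (nth 0 s j =P 0); try case: (t_neg j); lia.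
Qed.

Lemma t_abs_mod j : t_abs j %% q = nth 0 s j.
Proof.
by rewrite /t_abs; case: eqP => [->|_]; rewrite ?modnn ?modn_small ?nth_s_lt.
Qed.

Lemma abs_mod_U_block b j : abs_mod (U_block b j) = nth 0 s j.
Proof.
have ltsq := nth_s_lt j; have lesq := ltnW ltsq.
have /andP[_ letq] := t_abs_bounds j.
rewrite U_blockE; case: b => [|[|[|b]]].
- by rewrite abs_mod_small ?modn_small.
- by case: (nth 0 s j =P 0) => [->|_]; rewrite ?abs_mod_opp ?abs_mod_small ?mod0n ?modn_small.
- by case: (t_neg j); rewrite ?abs_mod_opp ?abs_mod_small ?t_abs_mod.
- by case: (t_neg j); rewrite ?abs_mod_opp ?abs_mod_small ?t_abs_mod.
Qed.

Lemma sign_U_block b j : sign (U_block b j) = sign_block b j.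
Proof.
have ltsq := nth_s_lt j; have abs_t := t_abs_bounds j.
rewrite U_blockE /sign_block; case: b => [|[|[|b]]] /=.
- case: (nth 0 s j =P 0) => [->//|/eqP s_neq0].
  by rewrite sign_pos // lt0n s_neq0 (ltnW ltsq).
- by case: (nth 0 s j =P 0) => [//|_]; rewrite sign_neg //; lia.
- by case: (t_neg j); [rewrite sign_neg // | rewrite sign_pos //]; lia.
- by case: (t_neg j); [rewrite sign_pos // | rewrite sign_neg //]; lia.
Qed.

Lemma absle_term_U_ring p : 0 < m -> absle (term U p).
Proof. by move=> m_gt0; rewrite term_U_ring // absle_U_block. Qed.

Lemma abs_mod_term_U_ring p : 0 < m -> abs_mod (term U p) = term s p.
Proof. by move=> m_gt0; rewrite term_U_ring // abs_mod_U_block. Qed.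

Lemma dvdn_sumn_U_ring : q' %| sumn U.
Proof.
rewrite /U_ring catA sumn_cat dvdn_add // dvdn_sumn_negq //.
  by apply: sub_all s_qary => x /=; lia.
apply/allP => _ /mapP[j _ ->]; have := t_abs_bounds j.
by rewrite t_termE; case: (t_neg j); lia.
Qed.

Lemma sign_term_U_ring b j : j < m -> sign (term U (b * m + j)) = sign_block (b %% 4) j.
Proof. by move=> ltjm; rewrite term_U_ring_block // sign_U_block. Qed.

Lemma sign_window_blocks01_neq n r :
    (forall i j, window s n i <> rev (window s n j)) -> nth 0 s 0 = 0 -> r < m ->
  ~ (forall k, k < n -> sign (term U (r + k)) = sign (term U (m + r + k))).
Proof.
move=> no_pal s0 ltrm eq_sign.
have [fits|wraps] := leqP (r + n) m.
- suff zero : window s n r = nseq n 0 by apply: (no_pal r r); rewrite zero rev_nseq.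
  apply: (@eq_from_nth _ 0) => [|k]; rewrite size_mkseq ?size_nseq // => ltkn.
  have ltrkm : r + k < m by lia.
  have := eq_sign k ltkn.
  have := sign_term_U_ring 0 ltrkm; have := sign_term_U_ring 1 ltrkm.
  rewrite mul0n add0n mul1n addnA => -> -> /=.
  rewrite nth_mkseq // nth_nseq ltkn /term (modn_small ltrkm).
  by case: (nth 0 s (r + k) =P 0).
- have ltmrn : m - r < n by lia.
  have := eq_sign _ ltmrn.
  have -> : r + (m - r) = 1 * m + 0 by lia.
  have -> : m + r + (m - r) = 2 * m + 0 by lia.
  by rewrite !sign_term_U_ring ?modn_small //= ?s0 //; lia.
Qed.

Lemma sign_pair_blocks_neq b b' r :
    nth 0 s 0 = 0 -> b < b' < 4 -> (b, b') != (0, 1) -> r < m ->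
    sign (term U (b * m + r)) = sign (term U (b' * m + r)) ->
    sign (term U (b * m + r).+1) = sign (term U (b' * m + r).+1) -> False.
Proof.
move=> s0 /andP[ltbb' ltb'4] not01 ltrm; have m_gt0 : 0 < m by lia.
have [ltr1m|ler1m] := ltnP r.+1 m.
- have ltb4 := ltn_trans ltbb' ltb'4.
  rewrite -!addnS !sign_term_U_ring // (modn_small ltb'4) (modn_small ltb4).
  by case: b b' ltbb' ltb'4 ltb4 not01 => [|[|[|[|?]]]] [|[|[|[|?]]]] //= _ _ _ _;
    rewrite ?t_negS //; case: (nth 0 s r == 0); case: (nth 0 s r.+1 == 0);
    case: (t_neg r) => /=; congruence.
- have r_last : r = m.-1 by lia.
  have blockS c : (c * m + r).+1 = c.+1 * m + 0 by rewrite mulSn; lia.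
  rewrite !blockS !sign_term_U_ring // r_last.
  by case: b b' ltbb' ltb'4 not01 => [|[|[|[|?]]]] [|[|[|[|?]]]] //= _ _ _;
    rewrite ?modnn ?modn_small //= ?t_neg_last ?s0 /=;
    case: (nth 0 s m.-1 == 0); case: (t_neg 0) => /=; congruence.
Qed.

Lemma window_U_ring_eq_mod n i j : OS q n s -> nth 0 s 0 = 0 -> 1 < n ->
  window U n i = window U n j -> i = j %[mod m] -> i = j %[mod 4 * m].
Proof.
move=> [_ [m_gt0 _] no_pal] s0 n_gt1 eq_w eq_mod.
rewrite -(window_mod U n i) -(window_mod U n j) size_U_ring in eq_w.
rewrite !modn_mul_split -eq_mod in eq_w *.
set r := i %% m in eq_w *; have ltrm : r < m by rewrite ltn_mod.
suff -> : i %/ m %% 4 = j %/ m %% 4 by [].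
have : i %/ m %% 4 < 4 by rewrite ltn_mod.
have : j %/ m %% 4 < 4 by rewrite ltn_mod.
move: (i %/ m %% 4) (j %/ m %% 4) eq_w => b b' eq_w ltb'4 ltb4.
have eq_sign k : k < n -> sign (term U (b * m + r + k)) = sign (term U (b' * m + r + k)).
  by move=> ltkn; have := congr1 (nth 0 ^~ k) eq_w; rewrite !nth_mkseq // => ->.
wlog ltbb' : b b' ltb4 ltb'4 eq_sign {eq_w} / b < b'.
  move=> gen; case: (ltngtP b b') => [|ltb'b|//]; first exact: gen.
  by apply/esym/gen => // k ltkn; rewrite eq_sign.
case: (boolP ((b, b') == (0, 1))) => [/eqP[b0 b'1]|not01]; exfalso.
  apply: (sign_window_blocks01_neq no_pal s0 ltrm) => k ltkn.
  by have := eq_sign k ltkn; rewrite b0 b'1 mul0n add0n mul1n.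
apply: (sign_pair_blocks_neq s0 _ not01 ltrm); first by rewrite ltbb'.
  by have := eq_sign 0 (ltnW n_gt1); rewrite !addn0.
by have := eq_sign 1 n_gt1; rewrite !addn1.
Qed.

Variable U' : seq nat.
Hypotheses (m_gt0 : 0 < m) (U'_rep : half_replacement q q' U U').

Lemma fills_term_filled p : fills (term U p) (term U' p).
Proof. by apply: term_fills; rewrite // size_U_ring muln_gt0. Qed.

Lemma unfill_term_filled p : unfill (term U' p) = term U p.
Proof. exact: unfill_fill (absle_term_U_ring p m_gt0) (fills_term_filled p). Qed.

Lemma decode_term_filled p : decode (term U' p) = term s p.
Proof. by rewrite /decode unfill_term_filled abs_mod_term_U_ring. Qed.

Lemma decode_negq_term_filled p : decode (negq q' (term U' p)) = term s p.
Proof.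
have absle_Up := absle_term_U_ring p m_gt0.
rewrite /decode (unfill_negq_fill q'_ge absle_Up (fills_term_filled p)).
by rewrite abs_mod_negq // abs_mod_term_U_ring.
Qed.

Lemma qary_filled : qary q' U'.
Proof.
case: U'_rep => eq_size _; apply/(all_nthP 0) => p ltpU'.
have := fill_lt q'_ge (absle_term_U_ring p m_gt0) (fills_term_filled p).
by rewrite /term modn_small.
Qed.

Lemma SOS_filled n : OS q n s -> nth 0 s 0 = 0 -> 1 < n -> SOS q' n U'.
Proof.
move=> s_OS s0 n_gt1; have [_ [_ s_window] s_no_rev] := s_OS.
have size_U' : size U' = 4 * m by case: U'_rep => ->; rewrite size_U_ring.
split; [split; [exact: qary_filled | split | ] | ].
- by rewrite size_U' muln_gt0.
- move=> i j eq_w; rewrite size_U'; apply: (window_U_ring_eq_mod s_OS) => //.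
    by rewrite -!(window_map _ _ unfill_term_filled) eq_w.
  by apply: s_window; rewrite -!(window_map _ _ decode_term_filled) eq_w.
- move=> i j eq_w; apply: (s_no_rev i j).
  by apply: (window_rev_map (f := id) decode_term_filled decode_term_filled); rewrite map_id.
- move=> i j eq_w; apply: (s_no_rev i j).
  exact: window_rev_map decode_term_filled decode_negq_term_filled eq_w.
Qed.

Lemma good_filled n : 1 < n -> good n U'.
Proof. by move/good_of_neq0; apply=> p; apply: fill_neq0 (fills_term_filled p). Qed.

Lemma weight_mod_filled : weight_mod q' U' = 0.
Proof.
have [eq_size [A [uniqA A_zero cntA U'E]]] := U'_rep.
rewrite /weight_mod /weight (sumn_replace_zeros eq_size uniqA A_zero cntA U'E).
rewrite subnKC; last lia.
by rewrite addnC modnMDl; apply/eqP; exact: dvdn_sumn_U_ring.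
Qed.

End URing.

Theorem theorem4p4 (q q' n : nat) (s U' : seq nat) :
  1 < q -> 1 < n -> (2 * q + 2 <= q')%N ->
  OS q n s -> nth 0 s 0 = 0 ->
  half_replacement q q' (U_ring q q' s) U' ->
  [/\ SOS q' n U', good n U', size U' = size (U_ring q q' s)
    & weight_mod q' U' = 0].
Proof.
move=> q_gt1 n_gt1 q'_ge s_OS s0 U'_rep.
have [s_qary [m_gt0 _] _] := s_OS; have q_gt0 := ltnW q_gt1.
split.
- exact: (SOS_filled q_gt0 q'_ge s_qary m_gt0 U'_rep s_OS s0 n_gt1).
- exact: (good_filled q'_ge m_gt0 U'_rep n_gt1).
- by case: U'_rep.
- exact: (weight_mod_filled q_gt0 q'_ge s_qary m_gt0 U'_rep).
Qed.
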